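(* Let $T:X\to X$ be a continuous map on a compact metric space $X$ such that $\mathcal M^p_T(X)$ is dense in $\mathcal M_T(X)$. Let $\varphi=(\varphi_1,\ldots,\varphi_d)\in C(X,\mathbb R^d)$ and $h\in\operatorname{int}(\mathrm{Rot}(\varphi))$. Then $\mathrm{rv}_\varphi^{-1}(h)\cap\mathcal N_T$ is dense in $\mathrm{rv}_\varphi^{-1}(h)$.
   Context: $\mathcal M_T(X)$ is the set of $T$-invariant Borel probability measures with the weak* topology; $\mathcal M^p_T(X)$ is the set of invariant measures supported on a single periodic orbit. For $\mu\in\mathcal M_T(X)$, $\mathrm{rv}_\varphi(\mu)=(\int\varphi_1d\mu,\dots,\int\varphi_dd\mu)$, $\mathrm{Rot}(\varphi)=\{\mathrm{rv}_\varphi(\mu):\mu\in\mathcal M_T(X)\}\subset\mathbb R^d$, and $\mathrm{rv}_\varphi^{-1}(h)\subset \mathcal M_T(X)$ carries the subspace topology. Let $\Delta^{d+1}=\{(\lambda_1,\dots,\lambda_{d+1})\in(0,1)^{d+1}:\sum\lambda_i=1\}$. $\mathcal N_T$ is the set of measures $\sum_{i=1}^{d+1}\lambda_i\mu_i$ with $\mu_i\in\mathcal M^p_T(X)$, $(\lambda_1,\dots,\lambda_{d+1})\in\Delta^{d+1}$, and such that the vectors $\mathrm{rv}_\varphi(\mu_i)-\mathrm{rv}_\varphi(\mu_{d+1})$, $i=1,\dots,d$, span $\mathbb R^d$. *)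

From HB Require Import structures.
From mathcomp Require Import all_boot all_order all_algebra.
From mathcomp Require Import all_classical all_reals all_analysis.
Set Implicit Arguments. Unset Strict Implicit. Unset Printing Implicit Defensive.
Import Order.TTheory GRing.Theory Num.Theory.
Import numFieldNormedType.Exports.
Local Open Scope classical_set_scope.
Local Open Scope ring_scope.

Definition borel (X : ptopologicalType) := g_sigma_algebraType (@open X).

Definition bprob (R : realType) (X : ptopologicalType) := probability (borel X) R.

Definition invariant (R : realType) (X : ptopologicalType) (T : X -> X)
  (mu : bprob R X) : Prop :=
  forall A : set (borel X), measurable A -> mu (T @^-1` A) = mu A.

Definition MT (R : realType) (X : ptopologicalType) (T : X -> X) : set (bprob R X) :=
  [set mu | invariant T mu].

Definition MTp (R : realType) (X : ptopologicalType) (T : X -> X) : set (bprob R X) :=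
  [set mu | invariant T mu /\
    exists (x : X) (n : nat), (0 < n)%N /\ iter n T x = x /\
      mu [set y : borel X | exists2 k, (k < n)%N & y = iter k T x] = 1%E].

Definition integ (R : realType) (X : ptopologicalType) (mu : bprob R X)
  (f : X -> R) : R := fine (\int[mu]_x (f x)%:E)%E.

Definition rv (R : realType) (X : ptopologicalType) (d : nat)
  (phi : X -> 'rV[R]_d) (mu : bprob R X) : 'rV[R]_d :=
  \row_(i < d) integ mu (fun x => phi x ord0 i).

Definition Rot (R : realType) (X : ptopologicalType) (T : X -> X) (d : nat)
  (phi : X -> 'rV[R]_d) : set 'rV[R]_d :=
  rv phi @` @MT R X T.

Definition NT (R : realType) (X : ptopologicalType) (T : X -> X) (d : nat)
  (phi : X -> 'rV[R]_d) : set (bprob R X) :=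
  [set nu | exists (mus : 'I_d.+1 -> bprob R X) (lam : 'I_d.+1 -> R),
     (forall i, @MTp R X T (mus i)) /\
     (forall i, 0 < lam i < 1) /\ \sum_i lam i = 1 /\
     (forall A : set (borel X), measurable A ->
        nu A = (\sum_i (lam i)%:E * mus i A)%E) /\
     row_full (\matrix_(i < d)
        (rv phi (mus (widen_ord (leqnSn d) i)) - rv phi (mus ord_max)))].

(* S is dense in U for the (subspace of the) weak* topology:
   every weak*-basic neighbourhood of every point of U meets S inside U. *)
Definition weak_dense_in (R : realType) (X : ptopologicalType)
  (S U : set (bprob R X)) : Prop :=
  forall mu, U mu ->
  forall (n : nat) (fs : 'I_n -> X -> R), (forall j, continuous (fs j)) ->
  forall eps : R, 0 < eps ->
  exists nu, S nu /\ U nu /\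
    forall j, `| integ nu (fs j) - integ mu (fs j) | < eps.

(* As h is interior to Rot(phi),
   the vertices h + s v_j of a small simplex around h are rotation vectors of invariant
   measures rho_j; the mixtures m_j = (1 - t) mu + t rho_j are invariant, close to mu,
   and have rotation vectors h + t s v_j.  Replace each m_j by a nearby periodic measure
   nu_j, so close that rv(nu_j) moves by a small fraction of the simplex size t s.  The
   perturbed simplex still contains h in its interior: the barycentric coordinates of h
   solve a linear system whose matrix is t s (I + E) with E small, hence they stay near
   1/(d+1), and the edge vectors stay independent.  The resulting convex combination of
   the nu_j is in N_T, has rotation vector h and is close to mu. *)

From HB Require Import structures.
From mathcomp Require Import all_boot all_order all_algebra.
From mathcomp Require Import all_classical all_reals all_analysis.
From mathcomp Require Import measurable_realfun ring lra.
Import Order.TTheory GRing.Theory Num.Theory.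
Import numFieldNormedType.Exports.
Local Open Scope classical_set_scope.
Local Open Scope ring_scope.
Set Implicit Arguments. Unset Strict Implicit. Unset Printing Implicit Defensive.

Section NearIdentity.
Variables (R : realFieldType) (d : nat) (E : 'M[R]_d) (eta : R).
Hypotheses (eta_ge0 : 0 <= eta) (E_small : forall i j, `|E i j| <= eta)
  (d_eta_small : d%:R * eta <= 2^-1).

Lemma mulmx_small_bound (x : 'rV[R]_d) (b : R) :
  (forall j, `|x 0 j| <= b) -> forall j, `|(x *m E) 0 j| <= d%:R * eta * b.
Proof.
move=> xb j; rewrite mxE (le_trans (ler_norm_sum _ _ _)) //.
apply: (@le_trans _ _ (\sum_(i < d) eta * b)).
  by apply: ler_sum => i _; rewrite normrM mulrC ler_pM.
by rewrite sumr_const card_ord -mulrA mulr_natl.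
Qed.

Lemma near_identity_solution_bound (x y : 'rV[R]_d) (b : R) :
  0 <= b -> (forall j, `|y 0 j| <= b) -> x *m (1%:M + E) = y ->
  forall j, `|x 0 j| <= 2 * b.
Proof.
(* m := max_j |x_j| satisfies m <= b + d eta m with d eta <= 1/2. *)
move=> b_ge0 yb xE; set m := \big[Num.max/0]_j `|x 0 j|.
have xm j : `|x 0 j| <= m by exact: le_bigmax.
have m_ge0 : 0 <= m by exact: bigmax_ge_id.
have m_le : m <= b + d%:R * eta * m.
  apply: bigmax_le => [|j _]; first by rewrite addr_ge0 // !mulr_ge0.
  have -> : x 0 j = y 0 j - (x *m E) 0 j by rewrite -xE mulmxDr mulmx1 !mxE addrK.
  by rewrite (le_trans (ler_normB _ _)) // lerD // mulmx_small_bound.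
move=> j; apply: (le_trans (xm j)).
have : 0 <= (2^-1 - d%:R * eta) * m by rewrite mulr_ge0 // subr_ge0.
nra.
Qed.

Lemma near_identity_unit : 1%:M + E \in unitmx.
Proof.
rewrite -row_free_unit -kermx_eq0; apply/eqP/matrixP => i j.
have ker0 : row i (kermx (1%:M + E)) *m (1%:M + E) = 0 by rewrite -row_mul mulmx_ker row0.
have y0 k : `|(0 : 'rV[R]_d) 0 k| <= 0 by rewrite mxE normr0.
have := near_identity_solution_bound (lexx 0) y0 ker0 j.
by rewrite mulr0 normr_le0 !mxE => /eqP.
Qed.

Lemma near_identity_solution_dist (x y : 'rV[R]_d) (b : R) :
  0 <= b -> (forall j, `|y 0 j| <= b) -> x *m (1%:M + E) = y ->
  forall j, `|x 0 j - y 0 j| <= d%:R * eta * (2 * b).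
Proof.
move=> b_ge0 yb xE j.
have -> : x 0 j - y 0 j = - (x *m E) 0 j by rewrite -xE mulmxDr mulmx1 !mxE opprD addNKr.
by rewrite normrN; apply: mulmx_small_bound; exact: near_identity_solution_bound yb xE.
Qed.

Lemma near_identity_solution_near (y : 'rV[R]_d) (c : R) : 0 <= c ->
  (forall j, `|y 0 j - c| <= eta) ->
  forall j, `|(y *m invmx (1%:M + E)) 0 j - c| <= eta + d%:R * eta * (2 * (c + eta)).
Proof.
move=> c_ge0 y_near j; set x := y *m invmx _.
have xE : x *m (1%:M + E) = y by rewrite mulmxKV // near_identity_unit.
have y_bound k : `|y 0 k| <= c + eta.
  by rewrite -[y 0 k](subrK c) (le_trans (ler_normD _ _)) // addrC lerD // ger0_norm.
rewrite -[x 0 j](subrK (y 0 j)) -addrA (le_trans (ler_normD _ _)) // [eta + _]addrC lerD //.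
exact: near_identity_solution_dist (addr_ge0 c_ge0 eta_ge0) y_bound xE j.
Qed.

End NearIdentity.

Lemma convex_combination_dist (R : realFieldType) n (lam a : 'I_n -> R) (b e : R) :
  (forall i, 0 <= lam i) -> \sum_i lam i = 1 -> (forall i, `|a i - b| <= e) ->
  `|\sum_i lam i * a i - b| <= e.
Proof.
move=> lam_ge0 lam_sum1 ab.
have -> : \sum_i lam i * a i - b = \sum_i lam i * (a i - b).
  rewrite -[b in LHS]mul1r -lam_sum1 mulr_suml -sumrB.
  by apply: eq_bigr => i _; rewrite mulrBr.
rewrite (le_trans (ler_norm_sum _ _ _)) // -[e]mul1r -lam_sum1 mulr_suml.
by apply: ler_sum => i _; rewrite normrM ger0_norm // ler_wpM2l.
Qed.

Lemma simplex_tolerance (R : realFieldType) (dd c e : R) :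
  1 <= dd -> 0 < c -> dd * c + c = 1 -> 4 * dd ^+ 2 * e = c ->
  [/\ 0 < e, dd * e <= 2^-1 & dd * (e + dd * e * (2 * (c + e))) < c].
Proof.
move=> dd_ge1 c_gt0 ddc; rewrite expr2 => ddde.
have e_gt0 : 0 < e by nra.
have c_le : 2 * c <= 1.
  have : 0 <= (dd - 1) * c by rewrite mulr_ge0 ?subr_ge0 // ltW.
  nra.
have de_le : dd * e <= c / 4 by rewrite -ddde; nra.
have e_le : e <= c / 4 by nra.
split => //; first lra.
have : dd * e * (2 * (c + e)) <= dd * e * 2 by rewrite ler_pM2l; nra.
nra.
Qed.

Section PerturbedSimplex.
Variables (R : realFieldType) (d : nat).
Hypothesis d_gt0 : (0 < d)%N.

Lemma barycentric_extension (x : 'rV[R]_d) :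
  (forall k, 0 < x 0 k) -> \sum_k x 0 k < 1 ->
  exists lam : 'I_d.+1 -> R, [/\ forall j, 0 < lam j < 1, \sum_j lam j = 1,
    forall i, lam (widen_ord (leqnSn d) i) = x 0 i & lam ord_max = 1 - \sum_k x 0 k].
Proof.
move=> x_gt0 x_sum.
have x_le_sum k : x 0 k <= \sum_i x 0 i.
  by rewrite (bigD1 k) //= lerDl; apply: sumr_ge0 => i _; exact: ltW.
have x_lt1 k : x 0 k < 1 := le_lt_trans (x_le_sum k) x_sum.
have sum_gt0 : 0 < \sum_i x 0 i := lt_le_trans (x_gt0 (Ordinal d_gt0)) (x_le_sum _).
pose lam j := oapp (fun k => x 0 k) (1 - \sum_k x 0 k) (unlift ord_max j).
have widen_lift i : widen_ord (leqnSn d) i = lift ord_max i.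
  by apply: val_inj; rewrite /= /bump leqNgt ltn_ord.
have lamW i : lam (widen_ord (leqnSn d) i) = x 0 i by rewrite /lam widen_lift liftK.
have lamM : lam ord_max = 1 - \sum_k x 0 k by rewrite /lam unlift_none.
exists lam; split => // [j|].
  case: (unliftP ord_max j) => [k ->|->]; first by rewrite -widen_lift lamW x_gt0 x_lt1.
  by rewrite lamM subr_gt0 x_sum ltrBlDr ltrDl sum_gt0.
by rewrite big_ord_recr /= lamM (eq_bigr _ (fun i _ => lamW i)) addrC subrK.
Qed.

Lemma near_centroid_interior (x : 'rV[R]_d) (c err : R) :
  d%:R * c + c = 1 -> d%:R * err < c -> (forall k, `|x 0 k - c| <= err) ->
  (forall k, 0 < x 0 k) /\ \sum_k x 0 k < 1.
Proof.
move=> ddc derr x_near; have dd_ge1 : 1 <= d%:R :> R by rewrite ler1n.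
have x_between k : c - err <= x 0 k <= c + err.
  by have := x_near k; rewrite ler_norml => /andP[lo hi]; apply/andP; split; lra.
have err_lt : err < c.
  have err_ge0 : 0 <= err := le_trans (normr_ge0 _) (x_near (Ordinal d_gt0)).
  have : err <= d%:R * err by rewrite ler_peMl.
  lra.
split=> [k|]; first by case/andP: (x_between k) => lo _; lra.
apply: (@le_lt_trans _ _ (\sum_(k < d) (c + err))).
  by apply: ler_sum => k _; case/andP: (x_between k).
by rewrite sumr_const card_ord -[X in X < _]mulr_natl mulrDr; lra.
Qed.

Lemma barycentric_of_difference_solution (x h : 'rV[R]_d) (p : 'I_d.+1 -> 'rV[R]_d) :
  (forall k, 0 < x 0 k) -> \sum_k x 0 k < 1 ->
  x *m \matrix_(i < d) (p (widen_ord (leqnSn d) i) - p ord_max) = h - p ord_max ->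
  exists lam : 'I_d.+1 -> R,
    [/\ forall j, 0 < lam j < 1, \sum_j lam j = 1 & \sum_j lam j *: p j = h].
Proof.
move=> x_gt0 x_sum xM.
have [lam [lam01 lam_sum1 lamW lamM]] := barycentric_extension x_gt0 x_sum.
exists lam; split => //.
rewrite big_ord_recr /= lamM (eq_bigr _ (fun i _ => congr1 (fun a => a *: _) (lamW i))).
move: xM; rewrite mulmx_sum_row (eq_bigr _ (fun i _ => congr1 _ (rowK _ i))).
rewrite (eq_bigr _ (fun i _ => scalerBr _ _ _)) sumrB -scaler_suml => xM.
by rewrite scalerBl scale1r addrCA xM addrC subrK.
Qed.

(* e_j - c 1 for j < d and - c 1 for j = d, with c = 1/(d+1): the vertices of a
   simplex with barycentre 0. *)
Definition simplex_vertex (j : 'I_d.+1) : 'rV[R]_d :=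
  \row_k (((j : nat) == k)%:R - d.+1%:R^-1).

Lemma simplex_vertex_bounded j k : `|simplex_vertex j 0 k| <= 1.
Proof.
rewrite mxE; set c : R := d.+1%:R^-1.
have c_gt0 : 0 < c by rewrite invr_gt0 ltr0n.
have c_le1 : c <= 1 by rewrite invr_le1 ?ler1n ?unitfE ?pnatr_eq0.
by case: eqP => _ /=; rewrite ?sub0r ?normrN ger0_norm; lra.
Qed.

Lemma perturbed_simplex_barycentric :
  exists2 eta : R, 0 < eta &
  forall (h : 'rV[R]_d) (sig : R) (p : 'I_d.+1 -> 'rV[R]_d), 0 < sig ->
  (forall j k, `|p j 0 k - (h 0 k + sig * simplex_vertex j 0 k)| <= sig * eta) ->
  exists lam : 'I_d.+1 -> R, [/\ forall j, 0 < lam j < 1, \sum_j lam j = 1,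
    \sum_j lam j *: p j = h &
    row_full (\matrix_(i < d) (p (widen_ord (leqnSn d) i) - p ord_max))].
Proof.
pose dd : R := d%:R; pose c : R := d.+1%:R^-1.
have dd_ge1 : 1 <= dd by rewrite ler1n.
have c_gt0 : 0 < c by rewrite invr_gt0 ltr0n.
have ddc : dd * c + c = 1 by rewrite -[X in _ + X]mul1r -mulrDl natr1 mulfV ?pnatr_eq0.
pose e := c / (4 * dd ^+ 2).
have [e_gt0 de_small err_small] : [/\ 0 < e, dd * e <= 2^-1 &
    dd * (e + dd * e * (2 * (c + e))) < c].
  apply: (@simplex_tolerance R dd c e) => //.
  by rewrite /e mulrC divfK // mulf_neq0 ?expf_neq0 // gt_eqF //; lra.
exists (e / 2) => [|h sig p sig_gt0 p_near]; first by rewrite divr_gt0.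
(* The barycentric coordinates x of h solve x M = h - p_d, i.e. x (I + E) = y
   with E small and y close to the constant row c. *)
pose wd := widen_ord (leqnSn d).
pose M := \matrix_(i < d) (p (wd i) - p ord_max).
pose E := sig^-1 *: M - 1%:M.
pose r j k := sig^-1 * (p j 0 k - (h 0 k + sig * simplex_vertex j 0 k)).
have r_small j k : `|r j k| <= e / 2.
  by rewrite normrM ger0_norm ?invr_ge0 ?(ltW sig_gt0) // mulrC ler_pdivrMr // [_ * sig]mulrC.
have vertexW i k : simplex_vertex (wd i) 0 k = (i == k)%:R - c by rewrite mxE.
have vertexM k : simplex_vertex ord_max 0 k = - c by rewrite mxE /= gtn_eqF // sub0r.
have sigN : sig != 0 by rewrite gt_eqF.
have E_small i k : `|E i k| <= e.
  have -> : E i k = r (wd i) k - r ord_max k.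
    by rewrite /E /r vertexW vertexM !mxE; field.
  apply: (le_trans (ler_normB _ _)).
  by have := r_small (wd i) k; have := r_small ord_max k; lra.
pose y := sig^-1 *: (h - p ord_max).
have y_near k : `|y 0 k - c| <= e.
  have -> : y 0 k - c = - r ord_max k by rewrite /y /r vertexM !mxE; field.
  by rewrite normrN (le_trans (r_small _ _)) //; lra.
pose x := y *m invmx (1%:M + E).
have x_near k : `|x 0 k - c| <= e + dd * e * (2 * (c + e)).
  exact (near_identity_solution_near (ltW e_gt0) E_small de_small (ltW c_gt0) y_near k).
have [x_pos x_sum] := near_centroid_interior ddc err_small x_near.
have EM : 1%:M + E = sig^-1 *: M by rewrite addrC subrK.
have unitE : 1%:M + E \in unitmx := near_identity_unit (ltW e_gt0) E_small de_small.
have xM : x *m M = h - p ord_max.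
  rewrite -[M]scale1r -(mulfV sigN) -scalerA -EM -scalemxAr /x mulmxKV //.
  by rewrite /y scalerA mulfV // scale1r.
have [lam [lam01 lam_sum1 lam_p]] := barycentric_of_difference_solution x_pos x_sum xM.
exists lam; split => //.
by rewrite -/wd -/M -[M]scale1r -(mulfV sigN) -scalerA -EM row_full_unit unitmxZ ?unitfE.
Qed.

End PerturbedSimplex.

Section ConvexCombination.
Context (R : realType) (X : ptopologicalType) (n : nat) (lam : 'I_n -> R)
  (lam_ge0 : forall i, 0 <= lam i) (lam_sum1 : \sum_i lam i = 1)
  (mus : 'I_n -> bprob R X).
Local Open Scope ereal_scope.

Definition convex_measure (A : set (borel X)) : \bar R :=
  \sum_(i < n) (lam i)%:E * mus i A.

Let convex_measure0 : convex_measure set0 = 0.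
Proof. by rewrite /convex_measure big1 // => i _; rewrite measure0 mule0. Qed.

Let convex_measure_ge0 A : 0 <= convex_measure A.
Proof. by apply: sume_ge0 => i _; apply: mule_ge0; rewrite ?lee_fin. Qed.

Let convex_measure_sigma_additive : semi_sigma_additive convex_measure.
Proof.
move=> F mF tF mUF; rewrite [X in _ --> X](_ : _ =
    lim ((fun k => \sum_(0 <= i < k) convex_measure (F i)) @ \oo)).
  by apply: is_cvg_ereal_nneg_natsum => k _; exact: convex_measure_ge0.
rewrite /convex_measure nneseries_sum; last by move=> i j _; apply: mule_ge0; rewrite ?lee_fin.
by apply: eq_bigr => i _; rewrite measure_semi_bigcup // nneseriesZl.
Qed.

HB.instance Definition _ := isMeasure.Build _ _ _ convex_measure
  convex_measure0 convex_measure_ge0 convex_measure_sigma_additive.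

Let convex_measureT : convex_measure setT = 1.
Proof.
rewrite /convex_measure (eq_bigr (fun i => (lam i)%:E)); last first.
  by move=> i _; rewrite probability_setT mule1.
by rewrite sumEFin lam_sum1.
Qed.

HB.instance Definition _ := Measure_isProbability.Build _ _ _ convex_measure convex_measureT.

Definition convex_prob : bprob R X := convex_measure.

Let scaled_mus (k : nat) : {measure set (borel X) -> \bar R} :=
  if insub k is Some i then mscale (NngNum (lam_ge0 i)) (mus i) else mzero.

Lemma ge0_integral_convex_prob (g : X -> \bar R) :
  measurable_fun [set: borel X] g -> (forall x, 0 <= g x) ->
  \int[convex_prob]_x g x = \sum_i (lam i)%:E * \int[mus i]_x g x.
Proof.
move=> mg g_ge0.
have -> : convex_prob = msum scaled_mus n :> (set _ -> _).
  by apply/funext => A; apply: eq_bigr => i _; rewrite /scaled_mus valK.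
rewrite ge0_integral_measure_sum //.
by apply: eq_bigr => i _; rewrite /scaled_mus valK ge0_integral_mscale.
Qed.

Lemma MT_convex_prob (T : X -> X) : (forall i, MT T (mus i)) -> MT T convex_prob.
Proof. by move=> mus_inv A mA; apply: eq_bigr => i _; rewrite mus_inv. Qed.

End ConvexCombination.

Section BoundedIntegral.
Context (R : realType) (X : ptopologicalType) (f : X -> R) (M : R).
Hypotheses (mf : measurable_fun [set: borel X] f) (fM : forall x, `|f x| <= M).
Local Open Scope ereal_scope.

Let mEf : measurable_fun [set: borel X] (EFin \o f).
Proof. exact/measurable_EFinP. Qed.

Let bounded_ge0_integral (mu : bprob R X) (g : X -> \bar R) :
  measurable_fun [set: borel X] g -> (forall x, 0 <= g x <= M%:E) ->
  \int[mu]_x g x \is a fin_num /\ (0 <= fine (\int[mu]_x g x) <= M)%R.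
Proof.
move=> mg gM; have g_ge0 x : 0 <= g x by case/andP: (gM x).
have int_ge0 : 0 <= \int[mu]_x g x by exact: integral_ge0.
have int_leM : \int[mu]_x g x <= M%:E.
  apply: (@le_trans _ _ (\int[mu]_x (cst M%:E) x)).
    by apply: ge0_le_integral => // x _; case/andP: (gM x).
  have muT : (mu : {measure set (borel X) -> \bar R}) setT = 1 by exact: probability_setT.
  by rewrite integral_cst // muT mule1.
have fin : \int[mu]_x g x \is a fin_num by rewrite ge0_fin_numE // (le_lt_trans int_leM) ?ltry.
by split; rewrite // fine_ge0 //= -lee_fin fineK.
Qed.

Let f_between x : (- M <= f x <= M)%R.
Proof. by rewrite -ler_norml. Qed.

Let funepos_bounded x : 0 <= (EFin \o f)^\+ x <= M%:E.
Proof.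
have /andP[lo hi] := f_between x.
by rewrite funepos_ge0 funeposE ge_max !lee_fin; apply/andP; split; lra.
Qed.

Let funeneg_bounded x : 0 <= (EFin \o f)^\- x <= M%:E.
Proof.
have /andP[lo hi] := f_between x.
by rewrite funeneg_ge0 funenegE ge_max !lee_fin; apply/andP; split; lra.
Qed.

Let integ_funeposneg (mu : bprob R X) : integ mu f =
  (fine (\int[mu]_x (EFin \o f)^\+ x) - fine (\int[mu]_x (EFin \o f)^\- x))%R.
Proof.
have [pos_fin _] := bounded_ge0_integral mu (measurable_funepos mEf) funepos_bounded.
have [neg_fin _] := bounded_ge0_integral mu (measurable_funeneg mEf) funeneg_bounded.
by rewrite /integ integralE fineB.
Qed.

Lemma integ_bounded (mu : bprob R X) : (`|integ mu f| <= M)%R.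
Proof.
have [_ /andP[p0 pM]] := bounded_ge0_integral mu (measurable_funepos mEf) funepos_bounded.
have [_ /andP[n0 nM]] := bounded_ge0_integral mu (measurable_funeneg mEf) funeneg_bounded.
by rewrite integ_funeposneg ler_norml; apply/andP; split; lra.
Qed.

Lemma integ_convex_prob n (lam : 'I_n -> R) (lam_ge0 : forall i, (0 <= lam i)%R)
    (lam_sum1 : (\sum_i lam i)%R = 1%R) (mus : 'I_n -> bprob R X) :
  integ (convex_prob lam_ge0 lam_sum1 mus) f = (\sum_i lam i * integ (mus i) f)%R.
Proof.
have fin_parts (g : X -> \bar R) : measurable_fun [set: borel X] g ->
    (forall x, 0 <= g x <= M%:E) ->
    fine (\int[convex_prob lam_ge0 lam_sum1 mus]_x g x) =
    (\sum_i lam i * fine (\int[mus i]_x g x))%R.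
  move=> mg gM; rewrite ge0_integral_convex_prob //; last by move=> x; case/andP: (gM x).
  rewrite (eq_bigr (fun i => (lam i * fine (\int[mus i]_x g x))%:E)) ?sumEFin //.
  by move=> i _; rewrite EFinM fineK //; case: (bounded_ge0_integral (mus i) mg gM).
rewrite integ_funeposneg !fin_parts //; last 2 first.
- exact: measurable_funeneg.
- exact: measurable_funepos.
by rewrite -sumrB; apply: eq_bigr => i _; rewrite integ_funeposneg mulrBr.
Qed.

End BoundedIntegral.

Lemma continuous_measurable_borel (R : realType) (X : ptopologicalType) (f : X -> R) :
  continuous f -> measurable_fun [set: borel X] f.
Proof.
move=> /continuousP f_cont; apply: (measurability _ (RGenOpens.measurableE R)).
move=> _ [_ [a [b ->] <-]]; rewrite setTI; apply: sub_sigma_algebra.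
exact/f_cont/interval_open.
Qed.

Section Mixture.
Context (R : realType) (X : ptopologicalType) (t : R).
Hypothesis t01 : 0 <= t <= 1.

Definition mix_weights (i : 'I_2) : R := if i == ord0 then 1 - t else t.

Let mix_weights_ge0 i : 0 <= mix_weights i.
Proof.
by case/andP: t01 => t_ge0 t_le1; rewrite /mix_weights; case: ifP; rewrite ?subr_ge0.
Qed.

Let mix_weights_sum1 : \sum_i mix_weights i = 1.
Proof. by rewrite big_ord_recr big_ord1 /mix_weights /= subrK. Qed.

Definition mix (mu rho : bprob R X) : bprob R X :=
  convex_prob mix_weights_ge0 mix_weights_sum1 (fun i => if i == ord0 then mu else rho).

Lemma integ_mix (mu rho : bprob R X) (f : X -> R) (M : R) :
  measurable_fun [set: borel X] f -> (forall x, `|f x| <= M) ->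
  integ (mix mu rho) f = (1 - t) * integ mu f + t * integ rho f.
Proof. by move=> mf fM; rewrite (integ_convex_prob mf fM) big_ord_recr big_ord1. Qed.

Lemma MT_mix (T : X -> X) (mu rho : bprob R X) : MT T mu -> MT T rho -> MT T (mix mu rho).
Proof. by move=> MTmu MTrho; apply: MT_convex_prob => i; case: ifP. Qed.

Lemma integ_mix_dist (mu rho : bprob R X) (f : X -> R) (M : R) :
  continuous f -> (forall x, `|f x| <= M) ->
  `|integ (mix mu rho) f - integ mu f| <= t * (2 * M).
Proof.
move=> f_cont fM; have mf := continuous_measurable_borel f_cont.
rewrite (integ_mix _ _ mf fM).
have -> : forall a b : R, (1 - t) * a + t * b - a = t * (b - a) by move=> a b; ring.
rewrite normrM ger0_norm; last by case/andP: t01.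
rewrite ler_wpM2l //; first by case/andP: t01.
by rewrite mulr2n mulrDl mul1r (le_trans (ler_normB _ _)) // lerD // integ_bounded.
Qed.

End Mixture.

Section CompactSpace.
Context (R : realType) (X : ptopologicalType).
Hypothesis cX : compact [set: X].

Lemma compact_continuous_bounded (f : X -> R) :
  continuous f -> exists M, forall x, `|f x| <= M.
Proof.
move=> f_cont; have : compact (f @` [set: X]).
  by apply: continuous_compact => //; exact: continuous_subspaceT.
move=> /(@compact_bounded R R^o) [M [_ HM]].
by exists (M + 1) => x; apply: HM; [rewrite ltrDl | exists x].
Qed.

Lemma compact_continuous_bounded_family n (fs : 'I_n -> X -> R) :
  (forall a, continuous (fs a)) -> exists2 M, 0 < M & forall a x, `|fs a x| <= M.
Proof.
move=> fs_cont; have [Mf fsM] := choice (fun a => compact_continuous_bounded (fs_cont a)).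
exists (\big[Num.max/1]_a Mf a) => [|a x]; first by rewrite (lt_le_trans ltr01) ?bigmax_ge_id.
exact: le_trans (fsM a x) (le_bigmax _ _ _).
Qed.

Lemma continuous_coord (d : nat) (phi : X -> 'rV[R]_d) k :
  continuous phi -> continuous (fun x => phi x ord0 k).
Proof.
move=> phi_cont x; exact: (@continuous_comp _ _ _ phi (fun v : 'rV[R]_d => v ord0 k) x
  (phi_cont x) (@coord_continuous R 1 d ord0 k (phi x))).
Qed.

Lemma rv_convex_prob (d : nat) (phi : X -> 'rV[R]_d) n (lam : 'I_n -> R)
    (lam_ge0 : forall i, 0 <= lam i) (lam_sum1 : \sum_i lam i = 1)
    (mus : 'I_n -> bprob R X) : continuous phi ->
  rv phi (convex_prob lam_ge0 lam_sum1 mus) = \sum_i lam i *: rv phi (mus i).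
Proof.
move=> phi_cont; apply/rowP => k.
have coord_cont : continuous (fun x => phi x ord0 k) := continuous_coord phi_cont.
have [M coordM] := compact_continuous_bounded coord_cont.
rewrite mxE (integ_convex_prob (continuous_measurable_borel coord_cont) coordM) summxE.
by apply: eq_bigr => i _; rewrite !mxE.
Qed.

Lemma rv_mix (d : nat) (phi : X -> 'rV[R]_d) (t : R) (t01 : 0 <= t <= 1)
    (mu rho : bprob R X) : continuous phi ->
  rv phi (mix t01 mu rho) = (1 - t) *: rv phi mu + t *: rv phi rho.
Proof. by move=> phi_cont; rewrite rv_convex_prob // big_ord_recr big_ord1. Qed.

End CompactSpace.

Lemma weak_dense_in_rv (R : realType) (X : ptopologicalType) (S U : set (bprob R X))
    (d n : nat) (phi : X -> 'rV[R]_d) (fs : 'I_n -> X -> R) :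
  weak_dense_in S U -> continuous phi -> (forall a, continuous (fs a)) ->
  forall mu, U mu -> forall eps, 0 < eps ->
  exists nu, [/\ S nu, U nu, forall a, `|integ nu (fs a) - integ mu (fs a)| < eps
    & forall k, `|rv phi nu 0 k - rv phi mu 0 k| < eps].
Proof.
move=> dense phi_cont fs_cont mu Umu eps eps_gt0.
pose G (k : 'I_(n + d)) : X -> R :=
  match fintype.split k with inl a => fs a | inr b => fun x => phi x ord0 b end.
have G_cont k : continuous (G k).
  by rewrite /G; case: fintype.split => [a|b]; [exact: fs_cont | exact: continuous_coord].
have [nu [Snu [Unu nuG]]] := dense mu Umu _ G G_cont eps eps_gt0.
exists nu; split => // [a|k].
  by have := nuG (unsplit (inl a)); rewrite /G unsplitK.
by have := nuG (unsplit (inr k)); rewrite /G unsplitK !mxE.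
Qed.

Lemma interior_shift_bounded (R : realFieldType) (d : nat) (A : set 'rV[R]_d)
    (h : 'rV[R]_d) : interior A h ->
  exists2 s : R, 0 < s & forall v : 'rV[R]_d, (forall k, `|v 0 k| <= 1) -> A (h + s *: v).
Proof.
move/nbhs_ballP => [r r_gt0 hr]; exists (r / 2) => [|v v1]; first by rewrite divr_gt0.
apply: hr; split => // i k; rewrite /ball /= !mxE opprD addNKr normrN normrM (ord1 i).
rewrite ger0_norm ?divr_ge0 ?(ltW r_gt0) //.
rewrite (le_lt_trans (ler_wpM2l _ (v1 k))) ?mulr1 ?divr_ge0 ?ltr_pdivrMr ?ltr_pMr ?ltr1n //.
exact: ltW.
Qed.

Lemma NT_convex_prob (R : realType) (X : ptopologicalType) (T : X -> X) (d : nat)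
    (phi : X -> 'rV[R]_d) (lam : 'I_d.+1 -> R) (lam_ge0 : forall i, 0 <= lam i)
    (lam_sum1 : \sum_i lam i = 1) (nus : 'I_d.+1 -> bprob R X) :
  (forall i, MTp T (nus i)) -> (forall i, 0 < lam i < 1) ->
  row_full (\matrix_(i < d) (rv phi (nus (widen_ord (leqnSn d) i)) - rv phi (nus ord_max))) ->
  NT T phi (convex_prob lam_ge0 lam_sum1 nus).
Proof. by move=> nusP lam01 full; exists nus, lam. Qed.

Lemma invariant_simplex_around (R : realType) (X : ptopologicalType) (T : X -> X)
    (d : nat) (phi : X -> 'rV[R]_d) (h : 'rV[R]_d) (mu : bprob R X) n
    (fs : 'I_n -> X -> R) (eps : R) :
  compact [set: X] -> continuous phi -> (forall a, continuous (fs a)) ->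
  interior (Rot T phi) h -> MT T mu -> rv phi mu = h -> 0 < eps ->
  exists2 sig : R, 0 < sig & exists m : 'I_d.+1 -> bprob R X,
    [/\ forall j, MT T (m j), forall j, rv phi (m j) = h + sig *: simplex_vertex R j &
        forall j a, `|integ (m j) (fs a) - integ mu (fs a)| <= eps].
Proof.
move=> cX phi_cont fs_cont hh MT_mu rv_mu eps_gt0.
have [s s_gt0 Rot_shift] := interior_shift_bounded hh.
have vertexP j : exists rho, MT T rho /\ rv phi rho = h + s *: simplex_vertex R j.
  by have [rho ? ?] := Rot_shift _ (@simplex_vertex_bounded R d j); exists rho.
have [rho rhoP] := choice vertexP.
have [M M_gt0 fsM] := compact_continuous_bounded_family cX fs_cont.
pose t := Num.min 1 (eps / (2 * M)).
have t_gt0 : 0 < t by rewrite lt_min ltr01 divr_gt0 ?mulr_gt0.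
have t01 : 0 <= t <= 1 by rewrite ltW //= ge_min lexx.
have tM : t * (2 * M) <= eps.
  by rewrite -ler_pdivlMr ?mulr_gt0 // ge_min lexx orbT.
exists (t * s); first exact: mulr_gt0.
exists (fun j => mix t01 mu (rho j)); split=> j.
- exact: MT_mix (rhoP j).1.
- by rewrite rv_mix // rv_mu (rhoP j).2 scalerDr scalerA addrA -scalerDl subrK scale1r.
- by move=> a; rewrite (le_trans (integ_mix_dist _ _ _ (fs_cont a) (fsM a))).
Qed.

Theorem mainTheorem3 (R : realType) (X : pseudoPMetricType R)
  (hX : hausdorff_space X) (cX : compact [set: X])
  (T : X -> X) (cT : continuous T)
  (hdense : weak_dense_in (@MTp R X T) (@MT R X T))
  (d : nat) (hd : (0 < d)%N)
  (phi : X -> 'rV[R]_d) (cphi : continuous phi)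
  (h : 'rV[R]_d) (hh : interior (Rot T phi) h) :
  weak_dense_in (NT T phi) ((rv phi @^-1` [set h]) `&` @MT R X T).
Proof.
move=> mu [rv_mu MT_mu] n fs fs_cont eps eps_gt0.
have [sig sig_gt0 [m [MT_m rv_m integ_m]]] := invariant_simplex_around (eps := eps / 4)
  cX cphi fs_cont hh MT_mu rv_mu (divr_gt0 eps_gt0 (ltr0n _ 4)).
have [eta eta_gt0 barycentric] := perturbed_simplex_barycentric R hd.
pose tol := Num.min (eps / 2) (sig * eta).
have tol_gt0 : 0 < tol by rewrite lt_min divr_gt0 ?mulr_gt0.
have [nu nuP] := choice (fun j => weak_dense_in_rv hdense cphi fs_cont (MT_m j) tol_gt0).
have rv_nu j k : `|rv phi (nu j) 0 k - (h 0 k + sig * simplex_vertex R j 0 k)| <= sig * eta.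
  have [_ _ _ /(_ k)] := nuP j; rewrite rv_m !mxE => /ltW/le_trans; apply.
  by rewrite ge_min lexx orbT.
have [lam [lam01 lam_sum1 lam_rv full]] := barycentric _ _ _ sig_gt0 rv_nu.
have lam_ge0 j : 0 <= lam j by case/andP: (lam01 j) => /ltW.
exists (convex_prob lam_ge0 lam_sum1 nu); split; [|split; [split|]].
- by apply: NT_convex_prob => // j; have [] := nuP j.
- by rewrite /preimage /= rv_convex_prob // lam_rv.
- by apply: MT_convex_prob => j; have [] := nuP j.
move=> a; have [Ma faM] := compact_continuous_bounded cX (fs_cont a).
rewrite (integ_convex_prob (continuous_measurable_borel (fs_cont a)) faM).
suff nu_mu j : `|integ (nu j) (fs a) - integ mu (fs a)| <= 3 / 4 * eps.
  by apply: le_lt_trans (convex_combination_dist lam_ge0 lam_sum1 nu_mu) _; lra.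
have [_ _ /(_ a) nu_m _] := nuP j; have tol_le : tol <= eps / 2 by rewrite ge_min lexx.
have := ler_distD (integ (m j) (fs a)) (integ (nu j) (fs a)) (integ mu (fs a)).
by have := integ_m j a; lra.
Qed.
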